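(* For a mutually orthogonal $d$-dimensional pure-state ensemble $\Omega = \{(1/k,|\psi_j\rangle)\}_{j=0}^{k-1}$, \[ \mathbf{C}_{\mathrm{MIO}}(\Omega) + \mathbf{S}(\Omega) \leq \log_2 d . \]
   Context: Fix the incoherent basis as the computational basis $\{|i\rangle\}$; incoherent states $\mathcal{I}$ are density matrices diagonal in this basis, and MIO (maximally incoherent operations) are the quantum channels mapping $\mathcal{I}$ into itself. The robustness of coherence is $C_R(\rho)=\min\{s\ge 0 : (\rho+s\tau)/(1+s)\in\mathcal{I} \text{ for some state } \tau\}$. For an ensemble $\Omega=\{(p_j,\rho_j)\}_{j=0}^{k-1}$ of states on a $d$-dimensional system $A$, the post-discrimination coherence is $\mathbf{C}_{\mathrm{MIO}}(\Omega)=\log_2(1+\eta)$ with $\eta=\max \sum_j p_j C_R(\sigma_j)$, the maximum taken over MIO channels $\mathcal{N}_{A\to BA'}$ ($\dim B=k$, $A'\cong A$) with $\sigma_j=\mathrm{tr}_B[\mathcal{N}(\rho_j)]$ and $\sum_j p_j \mathrm{tr}[\mathcal{N}(\rho_j)(|j\rangle\langle j|_B\otimes I_{A'})]=P_{\mathrm{suc}}(\Omega)$, where $P_{\mathrm{suc}}(\Omega)=\max_{\text{POVMs }\{E_j\}}\sum_j p_j\mathrm{tr}(E_j\rho_j)$ is the optimal (minimum-error) discrimination probability. The distinguishability is $\mathbf{S}(\Omega)=S(\hat\omega)$, the von Neumann entropy of the average state $\hat\omega=\sum_j p_j|\psi_j\rangle\langle\psi_j|$. *)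

From HB Require Import structures.
From mathcomp Require Import all_boot all_order all_algebra.
From mathcomp Require Import all_classical all_reals.
From mathcomp Require Import exp.
From mathcomp Require Import complex mxtens.

Set Implicit Arguments.
Unset Strict Implicit.
Unset Printing Implicit Defensive.

Import Order.TTheory GRing.Theory Num.Theory.
Local Open Scope ring_scope.
Local Open Scope classical_set_scope.
Local Open Scope complex_scope.

Section QDefs.
Variable R : realType.
Local Notation C := R[i].

Definition adj {m n} (A : 'M[C]_(m, n)) : 'M[C]_(n, m) := (map_mx conjc A)^T.

(* positive semidefinite: v^* A v >= 0 (i.e. real and nonnegative) for all v *)
Definition psd {n} (A : 'M[C]_n) : Prop :=
  forall v : 'cV[C]_n, 0 <= (adj v *m A *m v) 0 0.

Definition density {n} (rho : 'M[C]_n) : Prop := psd rho /\ \tr rho = 1.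

Definition incoherent {n} (rho : 'M[C]_n) : Prop := density rho /\ is_diag_mx rho.

(* positivity of an operator on C^l (x) C^n given as an l x l array of n x n blocks
   X i j  (block (i,j) = (<i| (x) I) X (|j> (x) I)) *)
Definition block_psd {l n} (X : 'I_l -> 'I_l -> 'M[C]_n) : Prop :=
  forall v : 'I_l -> 'cV[C]_n,
    0 <= \sum_(i < l) \sum_(j < l) (adj (v i) *m X i j *m v j) 0 0.

Definition is_linear_map {n m} (N : 'M[C]_n -> 'M[C]_m) : Prop :=
  forall (a : C) (A B : 'M[C]_n), N (a *: A + B) = a *: N A + N B.

Definition completely_positive {n m} (N : 'M[C]_n -> 'M[C]_m) : Prop :=
  forall (l : nat) (X : 'I_l -> 'I_l -> 'M[C]_n),
    block_psd X -> block_psd (fun i j => N (X i j)).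

Definition trace_preserving {n m} (N : 'M[C]_n -> 'M[C]_m) : Prop :=
  forall A : 'M[C]_n, \tr (N A) = \tr A.

Definition channel {n m} (N : 'M[C]_n -> 'M[C]_m) : Prop :=
  [/\ is_linear_map N, completely_positive N & trace_preserving N].

Definition MIO {n m} (N : 'M[C]_n -> 'M[C]_m) : Prop :=
  channel N /\ forall rho : 'M[C]_n, incoherent rho -> incoherent (N rho).

Definition robustness {n} (rho : 'M[C]_n) : R :=
  inf [set s : R | 0 <= s /\ exists tau : 'M[C]_n, density tau /\
         incoherent ((1 + s)^-1%:C *: (rho + s%:C *: tau))].

(* bipartite system B (x) A' with dim B = k, dim A' = d;
   basis vector |j>_B (x) |a>_A' has index mxtens_index (j, a) *)
Definition ptraceB {k d} (X : 'M[C]_(k * d)) : 'M[C]_d :=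
  \matrix_(a < d, b < d) \sum_(j < k) X (mxtens_index (j, a)) (mxtens_index (j, b)).

Definition projB {k d} (j : 'I_k) : 'M[C]_(k * d) :=
  (delta_mx j j : 'M[C]_k) *t (1%:M : 'M[C]_d).

Definition POVM {k d} (E : 'I_k -> 'M[C]_d) : Prop :=
  (forall j, psd (E j)) /\ \sum_(j < k) E j = 1%:M.

Definition Psuc {k d} (p : 'I_k -> R) (rho : 'I_k -> 'M[C]_d) : R :=
  sup [set x : R | exists E : 'I_k -> 'M[C]_d, POVM E /\
         x = complex.Re (\sum_(j < k) (p j)%:C * \tr (E j *m rho j))].

Definition log2 (x : R) : R := ln x / ln 2.

Definition eta_MIO {k d} (p : 'I_k -> R) (rho : 'I_k -> 'M[C]_d) : R :=
  sup [set x : R | exists N : 'M[C]_d -> 'M[C]_(k * d), MIO N /\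
         \sum_(j < k) (p j)%:C * \tr (N (rho j) *m projB j) = (Psuc p rho)%:C /\
         x = \sum_(j < k) p j * robustness (ptraceB (N (rho j)))].

Definition C_MIO {k d} (p : 'I_k -> R) (rho : 'I_k -> 'M[C]_d) : R :=
  log2 (1 + eta_MIO p rho).

Definition spectral {n} (rho : 'M[C]_n) (lam : 'I_n -> R) : Prop :=
  exists U : 'M[C]_n, adj U *m U = 1%:M /\
    rho = U *m diag_mx (\row_i (lam i)%:C) *m adj U.

Definition vN_entropy {n} (rho : 'M[C]_n) : R :=
  match pselect (exists lam, spectral rho lam) with
  | left H => let lam := projT1 (cid H) in - \sum_(i < n) lam i * log2 (lam i)
  | right _ => 0
  end.

Definition ket_proj {d} (psi : 'cV[C]_d) : 'M[C]_d := psi *m adj psi.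

End QDefs.

From HB Require Import structures.
From mathcomp Require Import all_boot all_order all_algebra.
From mathcomp Require Import all_classical all_reals.
From mathcomp Require Import exp.
From mathcomp Require Import complex mxtens.
Import Order.TTheory GRing.Theory Num.Theory.
Local Open Scope ring_scope.
Local Open Scope complex_scope.

(* Perfect discrimination forces the MIO output [N(rho_j)] into the block
   [|j><j| (x) _] of the register [B], so the reduced state [sigma_j] is that
   diagonal block.  It is dominated by the corresponding block [M_j] of the
   diagonal matrix [N(1)], and [M_j] witnesses [C_R(sigma_j) <= tr M_j - 1].
   Since the traces [tr M_j] add up to [tr N(1) = d], the uniform average of
   the robustnesses is at most [d/k - 1].  The average state is [1/k] times the
   projector onto the span of the [psi_j], of entropy [log2 k]. *)

Set Implicit Arguments.
Unset Strict Implicit.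
Unset Printing Implicit Defensive.

Section Adjoint.
Variable R : realType.
Local Notation C := R[i].

Fact adj_is_nmod_morphism m n : nmod_morphism (@adj R m n).
Proof. by split=> [|A B]; apply/matrixP => i j; rewrite !mxE ?conjc0 ?rmorphD. Qed.

HB.instance Definition _ m n :=
  GRing.isNmodMorphism.Build 'M[C]_(m, n) 'M[C]_(n, m) (@adj R m n)
    (adj_is_nmod_morphism m n).

Lemma adjM m n p (A : 'M[C]_(m, n)) (B : 'M[C]_(n, p)) :
  adj (A *m B) = adj B *m adj A.
Proof. by rewrite /adj map_mxM trmx_mul. Qed.

Lemma adjK m n (A : 'M[C]_(m, n)) : adj (adj A) = A.
Proof. by apply/matrixP => i j; rewrite !mxE conjcK. Qed.

Lemma adj_scale m n (c : C) (A : 'M[C]_(m, n)) : adj (c *: A) = c^* *: adj A.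
Proof. by apply/matrixP => i j; rewrite !mxE rmorphM. Qed.

Lemma adj_mx1 n : adj (1%:M : 'M[C]_n) = 1%:M.
Proof. by rewrite /adj map_mx1 trmx1. Qed.

Lemma adj_delta m n i j : adj (delta_mx i j : 'M[C]_(m, n)) = delta_mx j i.
Proof. by rewrite /adj map_delta_mx trmx_delta. Qed.

End Adjoint.

Section PositiveSemidefinite.
Variable R : realType.
Local Notation C := R[i].

Lemma dot_self_ge0 n (v : 'cV[C]_n) : 0 <= (adj v *m v) 0 0.
Proof.
rewrite mxE; apply: sumr_ge0 => i _; rewrite !mxE mulrC; exact: mulcJ_ge0.
Qed.

Lemma quad_delta n (A : 'M[C]_n) i j :
  adj (delta_mx i 0 : 'cV[C]_n) *m A *m delta_mx j 0 = (A i j)%:M.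
Proof. by apply/rowP => k; rewrite ord1 adj_delta -rowE -colE !mxE eqxx. Qed.

Lemma psd1 n : psd (1%:M : 'M[C]_n).
Proof. by move=> v; rewrite mulmx1; exact: dot_self_ge0. Qed.

Lemma psd0 n : psd (0 : 'M[C]_n).
Proof. by move=> v; rewrite mulmx0 mul0mx mxE. Qed.

Lemma psdD n (A B : 'M[C]_n) : psd A -> psd B -> psd (A + B).
Proof. by move=> hA hB v; rewrite mulmxDr mulmxDl mxE addr_ge0. Qed.

Lemma psdZ n (c : C) (A : 'M[C]_n) : 0 <= c -> psd A -> psd (c *: A).
Proof. by move=> hc hA v; rewrite -scalemxAr -scalemxAl mxE mulr_ge0. Qed.

Lemma psd_sum n I (r : seq I) (P : pred I) (F : I -> 'M[C]_n) :
  (forall i, P i -> psd (F i)) -> psd (\sum_(i <- r | P i) F i).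
Proof. by move=> hF; elim/big_ind: _ => //; [exact: psd0 | exact: psdD]. Qed.

Lemma psd_congruence m n (E : 'M[C]_(m, n)) (A : 'M[C]_m) :
  psd A -> psd (adj E *m A *m E).
Proof.
by move=> hA v; rewrite -!mulmxA mulmxA -adjM mulmxA; exact: hA.
Qed.

Lemma psd_gram m n (B : 'M[C]_(m, n)) : psd (B *m adj B).
Proof. by have := psd_congruence (adj B) (@psd1 n); rewrite adjK mulmx1. Qed.

Lemma psd_diag_ge0 n (A : 'M[C]_n) i : psd A -> 0 <= A i i.
Proof. by move=> hA; have := hA (delta_mx i 0); rewrite quad_delta mxE eqxx. Qed.

Lemma psd_mxtrace_ge0 n (A : 'M[C]_n) : psd A -> 0 <= \tr A.
Proof. by move=> hA; apply: sumr_ge0 => i _; exact: psd_diag_ge0. Qed.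

(* Testing [c] against [-c] makes the form vanish; [c = 1] and [c = 'i] then
   give [x + y = 0] and [x = y]. *)
Lemma sesquilinear_eq0 (x y : C) : (forall c, 0 <= c * x + c^* * y) -> x = 0.
Proof.
move=> hxy.
have hz c : c * x + c^* * y = 0.
  apply/le_anti; rewrite hxy andbT -oppr_ge0 opprD -!mulNr -rmorphN.
  exact: hxy.
have /eqP x_y : x == y.
  have := hz 'i; rewrite complexiE conjCi mulNr -mulrBr.
  by move/eqP; rewrite mulf_eq0 subr_eq0 (negbTE (neq0Ci _)).
by have /eqP := hz 1; rewrite rmorph1 !mul1r -x_y -mulr2n mulrn_eq0 => /eqP.
Qed.

Lemma psd_mxtrace_eq0 n (A : 'M[C]_n) : psd A -> \tr A = 0 -> A = 0.
Proof.
move=> hA trA0.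
have diag0 i : A i i = 0.
  by apply: (psumr_eq0P _ trA0) => // j _; exact: psd_diag_ge0.
apply/matrixP => a b; rewrite mxE.
have [->|_] := eqVneq a b; first exact: diag0.
apply: (@sesquilinear_eq0 _ (A b a)) => c.
have := hA (delta_mx a 0 + c *: delta_mx b 0).
rewrite [adj _]raddfD /= adj_scale !mulmxDl !mulmxDr -!scalemxAl -!scalemxAr.
by rewrite !quad_delta !diag0 !mxE eqxx !(mulr0, add0r, addr0).
Qed.

End PositiveSemidefinite.

Section BlocksB.
Variable R : realType.
Local Notation C := R[i].
Variables k d : nat.

Lemma sum_mxtens_index (V : nmodType) (F : 'I_(k * d) -> V) :
  \sum_x F x = \sum_(i < k) \sum_(a < d) F (mxtens_index (i, a)).
Proof.
rewrite pair_big /= (reindex (@mxtens_index k d)) /=; first by apply: eq_bigr => -[].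
by exists (@mxtens_unindex k d) => x _; rewrite (mxtens_indexK, mxtens_unindexK).
Qed.

Lemma eq_mxtens_index (p q : 'I_k * 'I_d) :
  (mxtens_index p == mxtens_index q) = (p == q).
Proof. exact/inj_eq/can_inj/mxtens_indexK. Qed.

(* [embedB j] is the isometry [|j>_B (x) I_A'], so that [blockB j X] is the
   diagonal block [(<j| (x) I) X (|j> (x) I)] of [X]. *)
Definition embedB (j : 'I_k) : 'M[C]_(k * d, d) :=
  \matrix_(x, a) (x == mxtens_index (j, a))%:R.

Definition blockB (j : 'I_k) (X : 'M[C]_(k * d)) : 'M[C]_d :=
  adj (embedB j) *m X *m embedB j.

Lemma embedB_delta j a :
  embedB j *m (delta_mx a 0 : 'cV_d) = delta_mx (mxtens_index (j, a)) 0.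
Proof. by apply/colP => x; rewrite -colE !mxE andbT. Qed.

Lemma blockBE j X a b :
  blockB j X a b = X (mxtens_index (j, a)) (mxtens_index (j, b)).
Proof.
have := quad_delta (blockB j X) a b.
rewrite /blockB !mulmxA -(adjM (embedB j)) -!mulmxA !embedB_delta mulmxA quad_delta.
by move/matrixP/(_ 0 0); rewrite !mxE eqxx.
Qed.

Lemma embedB_mul_adj j : embedB j *m adj (embedB j) = projB R j.
Proof.
apply/matrixP => x y.
rewrite -[x]mxtens_unindexK -[y]mxtens_unindexK.
case: (mxtens_unindex x) (mxtens_unindex y) => i a [i' b].
rewrite /projB tensmxE !mxE.
under eq_bigr => c _ do rewrite !mxE conjc_nat !eq_mxtens_index !xpair_eqE.
case: (i == j) => /=; last by rewrite mul0r big1 // => c _; rewrite mul0r.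
rewrite (bigD1 a) //= big1 => [|c /negbTE ca]; last by rewrite eq_sym ca mul0r.
by rewrite eqxx addr0 mul1r -mulnb natrM [b == a]eq_sym.
Qed.

Lemma blockBB j X Y : blockB j (X - Y) = blockB j X - blockB j Y.
Proof. by rewrite /blockB mulmxBr mulmxBl. Qed.

Lemma psd_blockB j X : psd X -> psd (blockB j X).
Proof. exact: psd_congruence. Qed.

Lemma mxtrace_mul_projB X j : \tr (X *m projB R j) = \tr (blockB j X).
Proof. by rewrite -embedB_mul_adj mulmxA mxtrace_mulC mulmxA. Qed.

Lemma mxtrace_sum_blockB X : \tr X = \sum_j \tr (blockB j X).
Proof.
rewrite /mxtrace sum_mxtens_index; apply: eq_bigr => j _.
by apply: eq_bigr => a _; rewrite blockBE.
Qed.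

Lemma ptraceB_sum_blockB X : ptraceB X = \sum_j blockB j X.
Proof.
by apply/matrixP => a b; rewrite !mxE summxE; apply: eq_bigr => j _; rewrite blockBE.
Qed.

Lemma blockB_diag j X : is_diag_mx X -> is_diag_mx (blockB j X).
Proof.
move=> /is_diag_mxP X_diag; apply/is_diag_mxP => a b ab; rewrite blockBE X_diag //.
by rewrite val_eqE eq_mxtens_index xpair_eqE eqxx.
Qed.

End BlocksB.

Section Channel.
Variable R : realType.
Local Notation C := R[i].
Variables (n m : nat) (N : 'M[C]_n -> 'M[C]_m).
Hypothesis N_channel : channel N.

Lemma channelB A B : N (A - B) = N A - N B.
Proof.
by case: N_channel => N_lin _ _; rewrite addrC -scaleN1r N_lin scaleN1r addrC.
Qed.

Lemma channelZ a A : N (a *: A) = a *: N A.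
Proof.
case: N_channel => N_lin _ _.
have N0 : N 0 = 0 by rewrite -(subrr A) channelB subrr.
by have := N_lin a A 0; rewrite !addr0 N0 addr0.
Qed.

Lemma channel_mxtrace A : \tr (N A) = \tr A.
Proof. by case: N_channel. Qed.

Lemma channel_psd A : psd A -> psd (N A).
Proof.
case: N_channel => _ N_cp _ A_psd v.
have A_bpsd : block_psd (fun _ _ : 'I_1 => A) by move=> w; rewrite !big_ord1.
by have := N_cp 1%N _ A_bpsd (fun=> v); rewrite !big_ord1.
Qed.

End Channel.

Section Robustness.
Variable R : realType.
Local Notation C := R[i].

Lemma is_diag_mxZ n (c : C) (A : 'M[C]_n) : is_diag_mx A -> is_diag_mx (c *: A).
Proof.
by move=> /is_diag_mxP A_diag; apply/is_diag_mxP => i j ij; rewrite mxE A_diag ?mulr0.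
Qed.

Lemma density_normalize n (A : 'M[C]_n) (t : R) :
  psd A -> \tr A = t%:C -> 0 < t -> density (t^-1%:C *: A).
Proof.
move=> A_psd trA t_gt0; split; first by apply: psdZ => //; rewrite lecR invr_ge0 ltW.
by rewrite mxtraceZ trA -rmorphM mulVf ?gt_eqF.
Qed.

Lemma incoherent_normalize n (M : 'M[C]_n) (t : R) :
  psd M -> is_diag_mx M -> \tr M = t%:C -> 0 < t -> incoherent (t^-1%:C *: M).
Proof.
by move=> M_psd M_diag trM t_gt0; split; [exact: density_normalize | exact: is_diag_mxZ].
Qed.

Lemma MIO_diag_mx1 n m (N : 'M[C]_n -> 'M[C]_m) :
  (0 < n)%N -> MIO N -> is_diag_mx (N 1%:M).
Proof.
move=> n_gt0 [N_channel N_incoh].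
have n_neq0 : (n%:R : C) != 0 by rewrite pnatr_eq0 -lt0n.
have : incoherent ((n%:R : R)^-1%:C *: (1%:M : 'M[C]_n)).
  apply: incoherent_normalize; [exact: psd1 | exact: scalar_mx_is_diag | | by rewrite ltr0n].
  by rewrite mxtrace1 rmorph_nat.
move=> /N_incoh [_]; rewrite (channelZ N_channel) => /(is_diag_mxZ (n%:R)%:C).
by rewrite scalerA -rmorphM mulfV ?pnatr_eq0 -?lt0n // scale1r.
Qed.

(* Witness [s = tr M - 1], [tau = (M - sig) / s], so that [sig + s tau = M]. *)
Lemma robustness_le n (sig M : 'M[C]_n) (m : R) :
  density sig -> psd M -> is_diag_mx M -> psd (M - sig) -> \tr M = m%:C ->
  robustness sig <= m - 1.
Proof.
move=> [sig_psd trsig] M_psd M_diag Msig_psd trM.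
have trMsig : \tr (M - sig) = (m - 1)%:C by rewrite raddfB /= trM trsig rmorphB rmorph1.
have m_ge1 : 1 <= m by rewrite -subr_ge0 -lecR -trMsig psd_mxtrace_ge0.
have [tau [tau_dens tauE]] : exists tau, density tau /\ (m - 1)%:C *: tau = M - sig.
  have [m1|m_neq1] := eqVneq m 1.
    exists sig; split=> //; rewrite m1 subrr scale0r.
    by apply/esym/psd_mxtrace_eq0; rewrite // trMsig m1 subrr.
  have m1_gt0 : 0 < m - 1 by rewrite subr_gt0 lt_neqAle eq_sym m_neq1.
  exists ((m - 1)^-1%:C *: (M - sig)); split; first exact: density_normalize.
  by rewrite scalerA -rmorphM mulfV ?gt_eqF // scale1r.
apply: ge_inf; first by exists 0 => s [].
split; first by rewrite subr_ge0.
exists tau; split=> //; rewrite tauE addrC subrK addrC subrK.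
by apply: incoherent_normalize => //; apply: lt_le_trans m_ge1.
Qed.

End Robustness.

Section OrthonormalEnsemble.
Variable R : realType.
Local Notation C := R[i].

Lemma ket_proj_adj n (v : 'cV[C]_n) : adj (ket_proj v) = ket_proj v.
Proof. by rewrite /ket_proj adjM adjK. Qed.

Lemma mxtrace_mul_ket_proj n (A : 'M[C]_n) (v : 'cV[C]_n) :
  \tr (A *m ket_proj v) = (adj v *m A *m v) 0 0.
Proof. by rewrite /ket_proj mulmxA mxtrace_mulC mulmxA /mxtrace big_ord1. Qed.

Lemma psd_sub1_proj n (Q : 'M[C]_n) : adj Q = Q -> Q *m Q = Q -> psd (1%:M - Q).
Proof.
move=> Q_adj Q_idem.
have -> : 1%:M - Q = (1%:M - Q) *m adj (1%:M - Q).
  by rewrite raddfB /= adj_mx1 Q_adj mulmxBl !mulmxBr !mul1mx mulmx1 Q_idem subrr subr0.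
exact: psd_gram.
Qed.

Variables (d k : nat) (psi : 'I_k -> 'cV[C]_d).
Hypothesis psi_norm : forall j, adj (psi j) *m psi j = 1%:M.
Hypothesis psi_orth : forall i j, i != j -> adj (psi i) *m psi j = 0.

Local Notation rho j := (ket_proj (psi j)).

Lemma ket_projM i j : rho i *m rho j = if i == j then rho j else 0.
Proof.
rewrite /ket_proj mulmxA -(mulmxA (psi i)).
by case: eqVneq => [->|ij]; rewrite ?psi_norm ?mulmx1 // psi_orth // mulmx0 mul0mx.
Qed.

Lemma mxtrace_ket_proj j : \tr (rho j) = 1.
Proof. by rewrite /ket_proj mxtrace_mulC psi_norm mxtrace1. Qed.

Definition span_proj : 'M[C]_d := \sum_j rho j.

Lemma span_proj_adj : adj span_proj = span_proj.
Proof. by rewrite raddf_sum /=; apply: eq_bigr => j _; rewrite ket_proj_adj. Qed.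

Lemma span_projM_ket_proj j : span_proj *m rho j = rho j.
Proof.
rewrite mulmx_suml (bigD1 j) //= ket_projM eqxx big1 ?addr0 // => i ij.
by rewrite ket_projM (negbTE ij).
Qed.

Lemma span_proj_idem : span_proj *m span_proj = span_proj.
Proof. by rewrite {2}/span_proj mulmx_sumr; apply: eq_bigr => j _; rewrite span_projM_ket_proj. Qed.

Lemma mxtrace_span_proj : \tr span_proj = k%:R.
Proof.
rewrite raddf_sum /=; under eq_bigr do rewrite mxtrace_ket_proj.
by rewrite sumr_const card_ord.
Qed.

Lemma psd_sub1_span_proj : psd (1%:M - span_proj).
Proof. exact: psd_sub1_proj span_proj_adj span_proj_idem. Qed.

Lemma ensemble_size_le : (k <= d)%N.
Proof.
have := psd_mxtrace_ge0 psd_sub1_span_proj.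
by rewrite raddfB /= mxtrace1 mxtrace_span_proj subr_ge0 ler_nat.
Qed.

End OrthonormalEnsemble.

(* Also covers [E = set0], since [sup set0 = 0]. *)
Lemma ge_sup_ge0 (R : realType) (E : set R) (x : R) :
  0 <= x -> ubound E x -> sup E <= x.
Proof.
move=> x_ge0 Ex; have [->|/set0P E_ne0] := eqVneq E set0; first by rewrite sup0.
exact: ge_sup.
Qed.

Section UniformOrthonormalEnsemble.
Variable R : realType.
Local Notation C := R[i].

Lemma POVM_mxtrace_ket_proj_le1 n m (E : 'I_m -> 'M[C]_n) (v : 'cV[C]_n) j :
  POVM E -> adj v *m v = 1%:M -> \tr (E j *m ket_proj v) <= 1.
Proof.
move=> [E_psd E_sum] v_norm.
have : psd (1%:M - E j).
  by rewrite -E_sum (bigD1 j) //= addrC addrK; exact: psd_sum.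
move=> /(_ v); rewrite mulmxBr mulmxBl mulmx1 v_norm mxtrace_mul_ket_proj.
by rewrite !mxE eqxx mulr1n subr_ge0.
Qed.

Variables (d k : nat) (psi : 'I_k -> 'cV[C]_d).
Hypothesis k_gt0 : (0 < k)%N.
Hypothesis psi_norm : forall j, adj (psi j) *m psi j = 1%:M.
Hypothesis psi_orth : forall i j, i != j -> adj (psi i) *m psi j = 0.

Local Notation p := (fun _ : 'I_k => (k%:R : R)^-1).
Local Notation rho j := (ket_proj (psi j)).

Lemma uniform_weightE : ((k%:R : R)^-1)%:C = (k%:R : C)^-1.
Proof. by rewrite fmorphV rmorph_nat. Qed.

Lemma uniform_mean_le1 (t : 'I_k -> C) :
  (forall j, t j <= 1) -> \sum_j ((k%:R : R)^-1)%:C * t j <= 1.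
Proof.
move=> t_le1; rewrite uniform_weightE -mulr_sumr ler_pdivrMl ?ltr0n // mulr1.
by rewrite -[k in k%:R]card_ord -sumr_const; apply: ler_sum.
Qed.

Lemma uniform_mean_eq1 (t : 'I_k -> C) :
  \sum_j ((k%:R : R)^-1)%:C * t j = 1 -> \sum_j t j = k%:R.
Proof.
have k_neq0 : (k%:R : C) != 0 by rewrite pnatr_eq0 -lt0n.
by rewrite uniform_weightE -mulr_sumr => /(canRL (mulVKf k_neq0)) ->; rewrite mulr1.
Qed.

Lemma Psuc_uniform : Psuc p (fun j => rho j) = 1.
Proof.
rewrite /Psuc; set S := (X in sup X).
have S_ub : ubound S 1.
  move=> _ [E [E_POVM ->]].
  have := uniform_mean_le1 (fun j => POVM_mxtrace_ket_proj_le1 j E_POVM (psi_norm j)).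
  by rewrite lecE => /andP [].
(* The projective measurement onto the [psi_j], completed by [1 - span_proj]. *)
pose j0 : 'I_k := Ordinal k_gt0.
pose E j := rho j + ((j == j0)%:R : C) *: (1%:M - span_proj psi).
have E_POVM : POVM E.
  split=> [j|].
    apply: psdD; first exact: psd_gram.
    by apply: psdZ; [exact: ler0n | exact: psd_sub1_span_proj].
  rewrite big_split /= -scaler_suml.
  have -> : \sum_j ((j == j0)%:R : C) = 1.
    by rewrite (bigD1 j0) //= big1 ?addr0 // => j /negbTE ->.
  by rewrite scale1r addrC subrK.
have E_rho j : \tr (E j *m rho j) = 1.
  rewrite mulmxDl -scalemxAl mulmxBl mul1mx span_projM_ket_proj // subrr scaler0 addr0.
  by rewrite ket_projM // eqxx mxtrace_ket_proj.
have S1 : S 1.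
  exists E; split=> //; under eq_bigr do rewrite E_rho mulr1.
  by rewrite sumr_const card_ord -rmorphMn -mulr_natr mulVf // pnatr_eq0 -lt0n.
apply/le_anti/andP; split; first by apply: ge_sup => //; exists 1.
by apply: sup_upper_bound => //; split; [exists 1 | exists 1].
Qed.

End UniformOrthonormalEnsemble.

(* [X j] is the output on the [j]-th state; [X_hit] says that measuring [B]
   returns [j] with certainty. *)
Section PerfectDiscrimination.
Variable R : realType.
Local Notation C := R[i].
Variables (k d : nat) (X : 'I_k -> 'M[C]_(k * d)).
Hypothesis X_psd : forall j, psd (X j).
Hypothesis X_tr : forall j, \tr (X j) = 1.
Hypothesis X_hit : \sum_j \tr (blockB j (X j)) = k%:R.

Let block_tr_ge0 l j : 0 <= \tr (blockB l (X j)).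
Proof. exact/psd_mxtrace_ge0/psd_blockB. Qed.

Let sum_block_tr j : \sum_l \tr (blockB l (X j)) = 1.
Proof. by rewrite -mxtrace_sum_blockB. Qed.

Lemma mxtrace_blockB_hit j : \tr (blockB j (X j)) = 1.
Proof.
have miss_ge0 i : 0 <= 1 - \tr (blockB i (X i)).
  by rewrite subr_ge0 -(sum_block_tr i) (bigD1 i) //= lerDl sumr_ge0.
have miss0 : \sum_i (1 - \tr (blockB i (X i))) = 0.
  by rewrite sumrB X_hit sumr_const card_ord subrr.
apply/eqP; rewrite eq_sym -subr_eq0; apply/eqP.
exact: (psumr_eq0P (fun i _ => miss_ge0 i) miss0).
Qed.

Lemma blockB_miss_eq0 l j : l != j -> blockB l (X j) = 0.
Proof.
move=> lj; apply: psd_mxtrace_eq0; first exact: psd_blockB.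
have miss0 : \sum_(i | i != j) \tr (blockB i (X j)) = 0.
  apply: (@addrI _ 1); rewrite addr0 -{2}(sum_block_tr j) [RHS](bigD1 j) //=.
  by rewrite mxtrace_blockB_hit.
exact: (psumr_eq0P (fun i _ => block_tr_ge0 i j) miss0).
Qed.

Lemma ptraceB_hit j : ptraceB (X j) = blockB j (X j).
Proof.
by rewrite ptraceB_sum_blockB (bigD1 j) //= big1 ?addr0 // => l; exact: blockB_miss_eq0.
Qed.

End PerfectDiscrimination.

Lemma ge0_ReE (R : rcfType) (z : R[i]) : 0 <= z -> (complex.Re z)%:C = z.
Proof. by case: z => a b; rewrite lecE /= => /andP [/eqP -> _]. Qed.

Section PostDiscriminationCoherence.
Variable R : realType.
Local Notation C := R[i].
Variables (d k : nat) (psi : 'I_k -> 'cV[C]_d).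
Hypothesis k_gt0 : (0 < k)%N.
Hypothesis psi_norm : forall j, adj (psi j) *m psi j = 1%:M.
Hypothesis psi_orth : forall i j, i != j -> adj (psi i) *m psi j = 0.

Local Notation p := (fun _ : 'I_k => (k%:R : R)^-1).
Local Notation rho j := (ket_proj (psi j)).

Lemma robustness_blockB_hit_le (N : 'M[C]_d -> 'M[C]_(k * d)) j :
  MIO N -> \tr (blockB j (N (rho j))) = 1 ->
  robustness (blockB j (N (rho j))) <= complex.Re (\tr (blockB j (N 1%:M))) - 1.
Proof.
move=> N_MIO hit; have [N_ch _] := N_MIO.
have d_gt0 : (0 < d)%N := leq_trans k_gt0 (ensemble_size_le psi_norm psi_orth).
have N1_psd : psd (blockB j (N 1%:M)) by apply/psd_blockB/(channel_psd N_ch)/psd1.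
apply: (robustness_le (M := blockB j (N 1%:M))).
- by split; first by apply/psd_blockB/(channel_psd N_ch)/psd_gram.
- exact: N1_psd.
- exact/blockB_diag/MIO_diag_mx1.
- rewrite -blockBB -(channelB N_ch); apply/psd_blockB/(channel_psd N_ch)/psd_sub1_proj.
    exact: ket_proj_adj.
  by rewrite ket_projM // eqxx.
- exact/esym/ge0_ReE/psd_mxtrace_ge0.
Qed.

Lemma eta_MIO_le : eta_MIO p (fun j => rho j) <= d%:R / k%:R - 1.
Proof.
have k_gt0R : 0 < k%:R :> R by rewrite ltr0n.
have k_le_d := ensemble_size_le psi_norm psi_orth.
apply: ge_sup_ge0; first by rewrite subr_ge0 ler_pdivlMr // mul1r ler_nat.
move=> _ [N [N_MIO [hit_avg ->]]]; have [N_ch _] := N_MIO.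
have X_psd j : psd (N (rho j)) by apply/(channel_psd N_ch)/psd_gram.
have X_tr j : \tr (N (rho j)) = 1 by rewrite (channel_mxtrace N_ch) mxtrace_ket_proj.
have X_hit : \sum_j \tr (blockB j (N (rho j))) = k%:R.
  apply: uniform_mean_eq1; move: hit_avg; rewrite Psuc_uniform // rmorph1 => <-.
  by apply: eq_bigr => j _; rewrite mxtrace_mul_projB.
have sum_m : \sum_j complex.Re (\tr (blockB j (N 1%:M))) = d%:R.
  apply: complexI; rewrite rmorph_sum rmorph_nat /=.
  have trE j : (complex.Re (\tr (blockB j (N 1%:M))))%:C = \tr (blockB j (N 1%:M)).
    exact/ge0_ReE/psd_mxtrace_ge0/psd_blockB/(channel_psd N_ch)/psd1.
  under eq_bigr do rewrite trE.
  by rewrite -mxtrace_sum_blockB (channel_mxtrace N_ch) mxtrace1.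
have rob_le j : (k%:R)^-1 * robustness (ptraceB (N (rho j))) <=
                (k%:R)^-1 * (complex.Re (\tr (blockB j (N 1%:M))) - 1).
  apply: ler_wpM2l; first by rewrite invr_ge0 ltW.
  rewrite (ptraceB_hit X_psd X_tr X_hit); apply: robustness_blockB_hit_le => //.
  exact: (mxtrace_blockB_hit X_psd X_tr X_hit).
apply: le_trans (ler_sum _ (fun j _ => rob_le j)) _.
by rewrite -mulr_sumr sumrB sum_m sumr_const card_ord mulrBr mulVf ?gt_eqF // mulrC.
Qed.

End PostDiscriminationCoherence.

Section Log2.
Variable R : realType.

Lemma log2V (x : R) : 0 < x -> log2 x^-1 = - log2 x.
Proof. by move=> x_gt0; rewrite /log2 lnV ?posrE // mulNr. Qed.

Lemma log2_div (x y : R) : 0 < x -> 0 < y -> log2 (x / y) = log2 x - log2 y.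
Proof. by move=> x_gt0 y_gt0; rewrite /log2 ln_div ?posrE // mulrBl. Qed.

Lemma log2_le0 (x : R) : x <= 1 -> log2 x <= 0.
Proof. by move=> x_le1; rewrite /log2 pmulr_lle0 ?invr_gt0 ?ln_gt0 ?ltr1n // ln_le0. Qed.

(* [ln x = 0] for [x <= 0], so no positivity assumption on [x] is needed. *)
Lemma ler_log2 (x y : R) : 1 <= y -> x <= y -> log2 x <= log2 y.
Proof.
move=> y_ge1 xy; have y_gt0 : 0 < y := lt_le_trans ltr01 y_ge1.
rewrite /log2 ler_wpM2r ?invr_ge0 ?ln_ge0 ?ler1n //.
have [x_gt0|x_le0] := ltrP 0 x; first by rewrite ler_ln ?posrE.
by rewrite ln0 // ln_ge0.
Qed.

End Log2.

Section Entropy.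
Variable R : realType.
Local Notation C := R[i].

Lemma spectral_mxtrace n (w : 'M[C]_n) lam :
  spectral w lam -> \tr w = (\sum_i lam i)%:C.
Proof.
move=> [U [UU ->]]; rewrite mxtrace_mulC mulmxA UU mul1mx mxtrace_diag rmorph_sum.
by apply: eq_bigr => i _; rewrite mxE.
Qed.

Lemma spectral_scaled_idem n (w : 'M[C]_n) lam (c : R) :
  spectral w lam -> w *m w = c%:C *: w -> forall i, lam i = 0 \/ lam i = c.
Proof.
move=> [U [UU wE]] ww i; set D := diag_mx _ in wE.
have UU' : U *m adj U = 1%:M := mulmx1C UU.
have DE : D = adj U *m w *m U by rewrite wE !mulmxA UU mul1mx -mulmxA UU mulmx1.
have DD : D *m D = c%:C *: D.
  rewrite DE -!mulmxA (mulmxA U) UU' mul1mx !mulmxA -(mulmxA _ w w) ww.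
  by rewrite -scalemxAr -scalemxAl.
move/matrixP/(_ i i): DD; rewrite mul_diag_mx !mxE eqxx mulr1n -!rmorphM => /complexI/eqP.
rewrite -subr_eq0 -mulrBl mulf_eq0 subr_eq0 => /orP [/eqP|/eqP]; by [left | right].
Qed.

Lemma vN_entropy_scaled_idem_le n (w : 'M[C]_n) (c : R) :
  c <= 1 -> w *m w = c%:C *: w -> \tr w = 1 -> vN_entropy w <= - log2 c.
Proof.
move=> c_le1 ww trw; rewrite /vN_entropy; case: pselect => [lam_ex|_]; last first.
  by rewrite oppr_ge0 log2_le0.
case: (cid lam_ex) => lam /= w_lam.
have sum_lam : \sum_i lam i = 1.
  by apply: complexI; rewrite -(spectral_mxtrace w_lam) trw rmorph1.
rewrite (eq_bigr (fun i => lam i * log2 c)) => [|i _]; first by rewrite -mulr_suml sum_lam mul1r.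
by case: (spectral_scaled_idem w_lam ww i) => ->; rewrite ?mul0r.
Qed.

Variables (d k : nat) (psi : 'I_k -> 'cV[C]_d).
Hypothesis k_gt0 : (0 < k)%N.
Hypothesis psi_norm : forall j, adj (psi j) *m psi j = 1%:M.
Hypothesis psi_orth : forall i j, i != j -> adj (psi i) *m psi j = 0.

Lemma vN_entropy_uniform_le :
  vN_entropy (\sum_j ((k%:R : R)^-1)%:C *: ket_proj (psi j)) <= log2 k%:R.
Proof.
have k_gt0R : 0 < k%:R :> R by rewrite ltr0n.
rewrite -scaler_sumr -(opprK (log2 _)) -log2V //.
apply: vN_entropy_scaled_idem_le; first by rewrite invf_le1 ?ler1n.
  by rewrite -scalemxAl -scalemxAr span_proj_idem // scalerA.
by rewrite mxtraceZ mxtrace_span_proj // uniform_weightE mulVf // pnatr_eq0 -lt0n.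
Qed.

End Entropy.

Theorem theorem1 (R : realType) (d k : nat) (psi : 'I_k -> 'cV[R[i]]_d)
  (hk : (0 < k)%N)
  (hnorm : forall j, adj (psi j) *m psi j = 1%:M)
  (horth : forall i j, i != j -> adj (psi i) *m psi j = 0) :
  let p := fun _ : 'I_k => (k%:R : R)^-1 in
  let rho := fun j => ket_proj (psi j) in
  C_MIO p rho + vN_entropy (\sum_(j < k) (p j)%:C *: rho j) <= log2 (d%:R : R).
Proof.
cbv zeta.
have k_gt0 : 0 < k%:R :> R by rewrite ltr0n.
have k_le_d : k%:R <= d%:R :> R by rewrite ler_nat (ensemble_size_le hnorm horth).
have eta_le : 1 + eta_MIO (fun=> (k%:R)^-1) (fun j => ket_proj (psi j)) <= d%:R / k%:R.
  by rewrite addrC -lerBrDr; exact: eta_MIO_le.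
have d_over_k_ge1 : 1 <= d%:R / k%:R :> R by rewrite ler_pdivlMr // mul1r.
have S_le := vN_entropy_uniform_le hk hnorm horth.
apply: le_trans (lerD (ler_log2 d_over_k_ge1 eta_le) S_le) _.
by rewrite log2_div ?subrK // (lt_le_trans k_gt0).
Qed.
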